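(* Let $A$ be the weighted shift on $\mathcal{H}$ with weights $\{1/n\}_{n\ge1}$. Then for every $r\ge0$, \[\lim_{z\to0}\frac{\ln\|(z-rA)^{-1}\|}{\ln\|(z-A)^{-1}\|}=r.\]
   Context: $\mathcal{H}$ is a separable infinite-dimensional complex Hilbert space with orthonormal basis $\{e_n\}_{n=0}^\infty$, and $A$ is defined by $Ae_n=\frac{1}{n+1}e_{n+1}$ for $n\ge0$. $A$ is quasinilpotent, and $z$ ranges over nonzero complex numbers. *)

From Stdlib Require Import Reals ClassicalEpsilon.
From Coquelicot Require Import Coquelicot.
Open Scope R_scope.

(* Concrete model of H = l^2(N; C) with orthonormal basis e_n = indicator of n. *)
Definition vec := nat -> C.

Definition l2 (x : vec) : Prop := ex_series (fun n => (Cmod (x n)) ^ 2).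

Definition l2norm (x : vec) : R := sqrt (Series (fun n => (Cmod (x n)) ^ 2)).

(* Operators are maps vec -> vec; only their action on l2 matters. *)
Definition op := vec -> vec.

(* The weighted shift: A e_n = e_{n+1}/(n+1), i.e. (A x)_0 = 0 and
   (A x)_{m+1} = x_m / (m+1). *)
Definition A : op := fun x m =>
  match m with
  | O => RtoC 0
  | S k => Cdiv (x k) (RtoC (INR (S k)))
  end.

Definition zsub (z : C) (r : R) (T : op) : op :=
  fun x n => Cminus (Cmult z (x n)) (Cmult (RtoC r) (T x n)).

Definition bounded_linear (S : op) : Prop :=
  (forall x, l2 x -> l2 (S x)) /\
  (forall x y, l2 x -> l2 y -> forall n, S (fun k => Cplus (x k) (y k)) n = Cplus (S x n) (S y n)) /\
  (forall (c : C) x, l2 x -> forall n, S (fun k => Cmult c (x k)) n = Cmult c (S x n)) /\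
  (exists M : R, forall x, l2 x -> l2norm (S x) <= M * l2norm x).

Definition is_inverse (T S : op) : Prop :=
  bounded_linear S /\
  (forall x, l2 x -> T (S x) = x) /\
  (forall x, l2 x -> S (T x) = x).

(* The inverse of T (chosen; unique whenever it exists). *)
Definition inverse (T : op) : op :=
  epsilon (inhabits (fun x : vec => x)) (is_inverse T).

Definition opnorm (S : op) : R :=
  real (Lub_Rbar (fun y => exists x, l2 x /\ l2norm x <= 1 /\ y = l2norm (S x))).

From Stdlib Require Import Reals Lra Lia Psatz FunctionalExtensionality ClassicalEpsilon.
From Coquelicot Require Import Coquelicot.
Open Scope R_scope.

(* The inverse of z - rA is computed by forward substitution:
   y_0 = x_0 / z and y_(n+1) = (x_(n+1) + r y_n / (n+1)) / z.  With s = 1/|z| and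
   u = r s, unrolling the recursion bounds |y_n| by s times the convolution of |x|
   with the weights u^k/k!, whose total mass is at most e^u, so Young's inequality
   gives ||(z - rA)^-1|| <= s e^u.  Conversely (z - rA)^-1 e_0 has coordinates
   exactly s u^k/k!, and at k = floor u Stirling's bound gives
   u^k/k! >= e^(u - O(ln u)).  Hence ln ||(z - rA)^-1|| = r/|z| + O(ln (1/|z|)),
   and the ratio of two such logarithms tends to r. *)

Lemma sum_n_nonneg_incr (a : nat -> R) : (forall n, 0 <= a n) ->
  forall n, sum_n a n <= sum_n a (S n).
Proof. intros Ha n. rewrite !sum_n_Reals, tech5. specialize (Ha (S n)). lra. Qed.

Lemma sum_f_R0_le_Series (a : nat -> R) : (forall n, 0 <= a n) -> ex_series a ->
  forall N, sum_f_R0 a N <= Series a.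
Proof.
  intros Ha [l Hl] N. rewrite (is_series_unique a l Hl), <- sum_n_Reals.
  exact (is_lim_seq_incr_compare _ l Hl (sum_n_nonneg_incr a Ha) N).
Qed.

Lemma ex_series_nonneg_bounded (a : nat -> R) (B : R) : (forall n, 0 <= a n) ->
  (forall N, sum_f_R0 a N <= B) -> ex_series a /\ Series a <= B.
Proof.
  intros Ha HB.
  destruct (ex_lim_seq_incr _ (sum_n_nonneg_incr a Ha)) as [l Hl].
  assert (Hle : Rbar_le l B).
  { apply (is_lim_seq_le (sum_n a) (fun _ => B) l B); [|exact Hl|apply is_lim_seq_const].
    intros n. rewrite sum_n_Reals. apply HB. }
  assert (Hge : Rbar_le 0 l).
  { apply (is_lim_seq_le (fun _ => 0) (sum_n a) 0 l); [|apply is_lim_seq_const|exact Hl].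
    intros n. rewrite sum_n_Reals. apply cond_pos_sum, Ha. }
  destruct l as [l| |]; try contradiction.
  assert (Hs : is_series a l) by exact Hl.
  split; [exists l; exact Hs|]. rewrite (is_series_unique a l Hs). exact Hle.
Qed.

Lemma sum_f_R0_weighted_Cauchy_Schwarz (w a : nat -> R) n : (forall j, 0 <= w j) ->
  (sum_f_R0 (fun j => w j * a j) n) ^ 2 <=
  sum_f_R0 w n * sum_f_R0 (fun j => w j * a j ^ 2) n.
Proof.
  intros Hw. induction n as [|n IHn].
  - simpl. specialize (Hw O). nra.
  - rewrite !tech5. set (S1 := sum_f_R0 (fun j => w j * a j) n) in *.
    set (W := sum_f_R0 w n) in *.
    set (Q := sum_f_R0 (fun j => w j * a j ^ 2) n) in *.
    assert (HW : 0 <= W) by (apply cond_pos_sum; auto).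
    assert (HQ : 0 <= Q).
    { apply cond_pos_sum. intros j. specialize (Hw j). pose proof (pow2_ge_0 (a j)). nra. }
    pose proof (Hw (S n)) as Hw'. set (b := a (S n)).
    (* W * (W b^2 - 2 b S1 + Q) = (W b - S1)^2 + (W Q - S1^2) *)
    assert (Hamgm : 2 * b * S1 <= W * b ^ 2 + Q).
    { destruct (Req_dec W 0) as [HW0|HW0].
      - rewrite HW0 in IHn |- *. assert (S1 = 0) by nra. subst. nra.
      - pose proof (pow2_ge_0 (W * b - S1)). nra. }
    pose proof (Rmult_le_compat_l _ _ _ Hw' Hamgm). nra.
Qed.

Lemma sum_f_R0_convolution_swap (c f : nat -> R) N :
  sum_f_R0 (fun n => sum_f_R0 (fun j => c (n - j)%nat * f j) n) N =
  sum_f_R0 (fun j => f j * sum_f_R0 c (N - j)) N.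
Proof.
  induction N as [|N IHN]; [simpl; lra|].
  rewrite tech5, IHN, (tech5 (fun j => f j * sum_f_R0 c (S N - j))),
    (tech5 (fun j => c (S N - j)%nat * f j)), Nat.sub_diag.
  rewrite (sum_eq (fun j => f j * sum_f_R0 c (S N - j))
                  (fun j => f j * sum_f_R0 c (N - j) + c (S N - j)%nat * f j)).
  - rewrite plus_sum. simpl. lra.
  - intros j Hj. replace (S N - j)%nat with (S (N - j)) by lia. rewrite tech5. ring.
Qed.

Lemma sum_f_R0_convolution_sq_le (c a : nat -> R) (E : R) :
  (forall k, 0 <= c k) -> (forall n, sum_f_R0 c n <= E) ->
  forall N, sum_f_R0 (fun n => (sum_f_R0 (fun j => c (n - j)%nat * a j) n) ^ 2) N
            <= E ^ 2 * sum_f_R0 (fun j => a j ^ 2) N.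
Proof.
  intros Hc HE N.
  assert (Hterm : forall n, (sum_f_R0 (fun j => c (n - j)%nat * a j) n) ^ 2 <=
                            sum_f_R0 (fun j => c (n - j)%nat * a j ^ 2) n * E).
  { intros n. eapply Rle_trans; [apply sum_f_R0_weighted_Cauchy_Schwarz; auto|].
    rewrite sum_f_R0_skip, Rmult_comm. apply Rmult_le_compat_l; [|apply HE].
    apply cond_pos_sum. intros j. specialize (Hc (n - j)%nat). pose proof (pow2_ge_0 (a j)). nra. }
  eapply Rle_trans; [apply sum_Rle; intros n _; apply Hterm|].
  rewrite <- scal_sum, sum_f_R0_convolution_swap.
  replace (E ^ 2 * _) with (E * (E * sum_f_R0 (fun j => a j ^ 2) N)) by ring.
  apply Rmult_le_compat_l; [specialize (HE O); specialize (Hc O); simpl in HE; lra|].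
  rewrite scal_sum. apply sum_Rle. intros j _.
  pose proof (pow2_ge_0 (a j)). pose proof (HE (N - j)%nat). nra.
Qed.

Definition exp_term (u : R) (k : nat) : R := u ^ k / INR (Factorial.fact k).

Lemma exp_term_nonneg u k : 0 <= u -> 0 <= exp_term u k.
Proof.
  intros Hu. apply Rmult_le_pos; [apply pow_le; exact Hu|].
  apply Rlt_le, Rinv_0_lt_compat, lt_0_INR, Factorial.lt_O_fact.
Qed.

Lemma exp_term_pos u k : 0 < u -> 0 < exp_term u k.
Proof.
  intros Hu. apply Rdiv_lt_0_compat; [apply pow_lt; exact Hu|].
  apply lt_0_INR, Factorial.lt_O_fact.
Qed.

Lemma exp_term_0 u : exp_term u 0 = 1.
Proof. unfold exp_term. simpl. field. Qed.

Lemma exp_term_S u k : exp_term u (S k) = exp_term u k * (u / INR (S k)).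
Proof.
  unfold exp_term. rewrite fact_simpl, mult_INR. simpl pow.
  pose proof (lt_0_INR _ (Factorial.lt_O_fact k)). pose proof (lt_0_INR (S k) ltac:(lia)).
  field. lra.
Qed.

Lemma exp_term_shift_le u n j : 0 <= u -> (j <= n)%nat ->
  exp_term u (n - j) * (u / INR (S n)) <= exp_term u (S n - j).
Proof.
  intros Hu Hj. replace (S n - j)%nat with (S (n - j)) by lia. rewrite exp_term_S.
  apply Rmult_le_compat_l; [apply exp_term_nonneg; exact Hu|].
  apply Rmult_le_compat_l; [exact Hu|].
  apply Rinv_le_contravar; [apply lt_0_INR; lia|apply le_INR; lia].
Qed.

Fixpoint resolvent (z : C) (r : R) (x : vec) (n : nat) : C :=
  match n with
  | O => (x O / z)%C
  | S m => ((x (S m) + r * (resolvent z r x m / INR (S m))) / z)%C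
  end.

Lemma RtoC_INR_S_neq0 n : RtoC (INR (S n)) <> RtoC 0.
Proof. intros H. apply RtoC_inj in H. revert H. apply not_0_INR. lia. Qed.

Lemma zsub_resolvent (z : C) (r : R) (x : vec) : z <> RtoC 0 -> zsub z r A (resolvent z r x) = x.
Proof.
  intros Hz. apply functional_extensionality. intros [|m]; unfold zsub, A; cbn [resolvent].
  - field. exact Hz.
  - pose proof (RtoC_INR_S_neq0 m). field. split; assumption.
Qed.

Lemma resolvent_zsub (z : C) (r : R) (x : vec) : z <> RtoC 0 -> resolvent z r (zsub z r A x) = x.
Proof.
  intros Hz. apply functional_extensionality. intros n. induction n as [|n IHn]; cbn [resolvent].
  - unfold zsub, A. field. exact Hz.
  - rewrite IHn. unfold zsub, A. pose proof (RtoC_INR_S_neq0 n). field. split; assumption.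
Qed.

Lemma resolvent_add z r x y n :
  resolvent z r (fun k => x k + y k)%C n = (resolvent z r x n + resolvent z r y n)%C.
Proof. induction n as [|n IHn]; cbn [resolvent]; [|rewrite IHn]; unfold Cdiv; ring. Qed.

Lemma resolvent_scal z r c x n :
  resolvent z r (fun k => c * x k)%C n = (c * resolvent z r x n)%C.
Proof. induction n as [|n IHn]; cbn [resolvent]; [|rewrite IHn]; unfold Cdiv; ring. Qed.

Lemma Cmod_resolvent_le (z : C) (r : R) (x : vec) n : z <> RtoC 0 -> 0 <= r ->
  Cmod (resolvent z r x n) <=
  / Cmod z * sum_f_R0 (fun j => exp_term (r * / Cmod z) (n - j) * Cmod (x j)) n.
Proof.
  intros Hz Hr. assert (Hs : 0 < / Cmod z) by (apply Rinv_0_lt_compat, Cmod_gt_0, Hz).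
  set (s := / Cmod z) in *. set (u := r * s). assert (Hu : 0 <= u) by (unfold u; nra).
  assert (Hxn : forall j, 0 <= Cmod (x j)) by (intros; apply Cmod_ge_0).
  induction n as [|n IHn]; cbn [resolvent].
  - rewrite Cmod_div by exact Hz. simpl. rewrite exp_term_0. unfold Rdiv. fold s. lra.
  - assert (Hn : 0 < INR (S n)) by (apply lt_0_INR; lia).
    assert (Htri : Cmod ((x (S n) + r * (resolvent z r x n / INR (S n))) / z)%C <=
                   s * (Cmod (x (S n)) + r * Cmod (resolvent z r x n) / INR (S n))).
    { rewrite Cmod_div by exact Hz. unfold Rdiv at 1. rewrite Rmult_comm.
      apply Rmult_le_compat_l; [lra|].
      eapply Rle_trans; [apply Cmod_triangle|].
      rewrite Cmod_mult, Cmod_div, !Cmod_R, !Rabs_pos_eq by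
        (auto using RtoC_INR_S_neq0, pos_INR).
      unfold Rdiv. lra. }
    assert (Hconv : r * Cmod (resolvent z r x n) / INR (S n) <=
                    sum_f_R0 (fun j => exp_term u (S n - j) * Cmod (x j)) n).
    { apply Rle_trans with
        (sum_f_R0 (fun j => exp_term u (n - j) * Cmod (x j)) n * (u / INR (S n))).
      - replace (_ * (u / INR (S n))) with
          (r * (s * sum_f_R0 (fun j => exp_term u (n - j) * Cmod (x j)) n) / INR (S n))
          by (unfold u; field; lra).
        unfold Rdiv. apply Rmult_le_compat_r; [apply Rlt_le, Rinv_0_lt_compat, Hn|].
        apply Rmult_le_compat_l; [exact Hr|exact IHn].
      - rewrite Rmult_comm, scal_sum. apply sum_Rle. intros j Hj.
        pose proof (exp_term_shift_le u n j Hu Hj). pose proof (Hxn j). nra. }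
    rewrite tech5, Nat.sub_diag, exp_term_0.
    eapply Rle_trans; [exact Htri|]. apply Rmult_le_compat_l; lra.
Qed.

Lemma resolvent_l2 (z : C) (r : R) (x : vec) : z <> RtoC 0 -> 0 <= r -> l2 x ->
  l2 (resolvent z r x) /\
  l2norm (resolvent z r x) <= / Cmod z * exp (r * / Cmod z) * l2norm x.
Proof.
  intros Hz Hr Hx. assert (Hs : 0 < / Cmod z) by (apply Rinv_0_lt_compat, Cmod_gt_0, Hz).
  set (s := / Cmod z) in *. set (u := r * s). assert (Hu : 0 <= u) by (unfold u; nra).
  set (a := fun j => Cmod (x j)).
  set (conv := fun n => sum_f_R0 (fun j => exp_term u (n - j) * a j) n).
  assert (Hsq : forall n, 0 <= Cmod (x n) ^ 2) by (intros; apply pow2_ge_0).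
  assert (Hpartial : forall N, sum_f_R0 (fun n => Cmod (resolvent z r x n) ^ 2) N <=
                               (s * exp u) ^ 2 * Series (fun n => Cmod (x n) ^ 2)).
  { intros N. apply Rle_trans with (s ^ 2 * sum_f_R0 (fun n => conv n ^ 2) N).
    - rewrite scal_sum. apply sum_Rle. intros n _. rewrite <- Rpow_mult_distr, Rmult_comm.
      apply pow_incr. split; [apply Cmod_ge_0|apply Cmod_resolvent_le; assumption].
    - rewrite Rpow_mult_distr, Rmult_assoc. apply Rmult_le_compat_l; [apply pow2_ge_0|].
      eapply Rle_trans.
      + apply (sum_f_R0_convolution_sq_le (exp_term u) a (exp u)).
        * intros k. apply exp_term_nonneg, Hu.
        * intros n. apply exp_ge_taylor, Hu.
      + apply Rmult_le_compat_l; [apply pow2_ge_0|]. apply sum_f_R0_le_Series; assumption. }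
  destruct (ex_series_nonneg_bounded _ _ (fun n => pow2_ge_0 _) Hpartial) as [Hex Hle].
  split; [exact Hex|]. unfold l2norm.
  assert (HK : 0 <= s * exp u) by (apply Rmult_le_pos; [lra|apply Rlt_le, exp_pos]).
  rewrite <- (sqrt_pow2 (s * exp u) HK), <- sqrt_mult_alt by apply pow2_ge_0.
  apply sqrt_le_1_alt, Hle.
Qed.

Lemma resolvent_is_inverse (z : C) (r : R) : z <> RtoC 0 -> 0 <= r ->
  is_inverse (zsub z r A) (resolvent z r).
Proof.
  intros Hz Hr. split; [|split].
  - split; [|split; [|split]].
    + intros x Hx. apply (resolvent_l2 z r x Hz Hr Hx).
    + intros x y _ _ n. apply resolvent_add.
    + intros c x _ n. apply resolvent_scal.
    + exists (/ Cmod z * exp (r * / Cmod z)). intros x Hx. apply (resolvent_l2 z r x Hz Hr Hx).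
  - intros x _. apply zsub_resolvent, Hz.
  - intros x _. apply resolvent_zsub, Hz.
Qed.

Lemma inverse_zsub_eq (z : C) (r : R) (x : vec) : z <> RtoC 0 -> 0 <= r -> l2 x ->
  inverse (zsub z r A) x = resolvent z r x.
Proof.
  intros Hz Hr Hx.
  assert (Hinv : is_inverse (zsub z r A) (inverse (zsub z r A))).
  { unfold inverse. apply epsilon_spec.
    exists (resolvent z r). apply resolvent_is_inverse; assumption. }
  destruct Hinv as [_ [_ Hleft]].
  rewrite <- (zsub_resolvent z r x Hz) at 1. apply Hleft, (resolvent_l2 z r x Hz Hr Hx).
Qed.

Definition e0 : vec := fun n => match n with O => RtoC 1 | S _ => RtoC 0 end.

Lemma e0_l2 : l2 e0 /\ l2norm e0 <= 1.
Proof.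
  assert (Hs : forall N, sum_f_R0 (fun n => Cmod (e0 n) ^ 2) N <= 1).
  { induction N as [|N IHN].
    - simpl. rewrite Cmod_1. lra.
    - rewrite tech5. simpl e0. rewrite Cmod_0. lra. }
  destruct (ex_series_nonneg_bounded _ 1 (fun n => pow2_ge_0 _) Hs) as [Hex Hle].
  split; [exact Hex|]. unfold l2norm. rewrite <- sqrt_1. apply sqrt_le_1_alt, Hle.
Qed.

Lemma opnorm_spec (S : op) (M : R) :
  (forall x, l2 x -> l2norm x <= 1 -> l2norm (S x) <= M) ->
  (forall x, l2 x -> l2norm x <= 1 -> l2norm (S x) <= opnorm S) /\ opnorm S <= M.
Proof.
  intros HM. unfold opnorm.
  set (E := fun y => exists x, l2 x /\ l2norm x <= 1 /\ y = l2norm (S x)).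
  destruct (Lub_Rbar_correct E) as [Hub Hleast].
  assert (Hle : Rbar_le (Lub_Rbar E) M).
  { apply Hleast. intros y [x [Hx [Hn ->]]]. exact (HM x Hx Hn). }
  assert (Hge : forall x, l2 x -> l2norm x <= 1 -> Rbar_le (l2norm (S x)) (Lub_Rbar E)).
  { intros x Hx Hn. apply Hub. exists x. auto. }
  destruct e0_l2 as [He0 He0n].
  revert Hle Hge. destruct (Lub_Rbar E) as [l| |]; simpl; intros Hle Hge.
  - split; [exact Hge|exact Hle].
  - contradiction.
  - contradiction (Hge e0 He0 He0n).
Qed.

Lemma Cmod_resolvent_e0 (z : C) (r : R) k : z <> RtoC 0 -> 0 <= r ->
  Cmod (resolvent z r e0 k) = / Cmod z * exp_term (r * / Cmod z) k.
Proof.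
  intros Hz Hr. assert (Hm : 0 < Cmod z) by (apply Cmod_gt_0, Hz).
  induction k as [|k IHk]; cbn [resolvent]; simpl e0.
  - rewrite Cmod_div, Cmod_1, exp_term_0 by exact Hz. unfold Rdiv. ring.
  - rewrite Cplus_0_l, Cmod_div, Cmod_mult, Cmod_div, !Cmod_R, !Rabs_pos_eq, IHk, exp_term_S
      by (auto using RtoC_INR_S_neq0, pos_INR).
    assert (0 < INR (S k)) by (apply lt_0_INR; lia). field. lra.
Qed.

Lemma Cmod_le_l2norm (y : vec) k : l2 y -> Cmod (y k) <= l2norm y.
Proof.
  intros Hy. unfold l2norm.
  assert (Hsq : forall n, 0 <= Cmod (y n) ^ 2) by (intros; apply pow2_ge_0).
  rewrite <- (sqrt_pow2 (Cmod (y k))) by apply Cmod_ge_0.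
  apply sqrt_le_1_alt. eapply Rle_trans; [|apply (sum_f_R0_le_Series _ Hsq Hy k)].
  destruct k as [|k]; [simpl; lra|]. rewrite tech5. pose proof (cond_pos_sum _ k Hsq). lra.
Qed.

Lemma opnorm_inverse_zsub_bounds (z : C) (r : R) : z <> RtoC 0 -> 0 <= r ->
  (forall k, / Cmod z * exp_term (r * / Cmod z) k <= opnorm (inverse (zsub z r A))) /\
  opnorm (inverse (zsub z r A)) <= / Cmod z * exp (r * / Cmod z).
Proof.
  intros Hz Hr. assert (Hs : 0 < / Cmod z) by (apply Rinv_0_lt_compat, Cmod_gt_0, Hz).
  destruct (opnorm_spec (inverse (zsub z r A)) (/ Cmod z * exp (r * / Cmod z))) as [Hge Hle].
  { intros x Hx Hn. rewrite inverse_zsub_eq by assumption.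
    eapply Rle_trans; [apply (resolvent_l2 z r x Hz Hr Hx)|].
    rewrite <- Rmult_1_r. apply Rmult_le_compat_l; [|exact Hn].
    apply Rmult_le_pos; [lra|apply Rlt_le, exp_pos]. }
  split; [|exact Hle]. intros k. destruct e0_l2 as [He0 He0n].
  rewrite <- Cmod_resolvent_e0 by assumption.
  eapply Rle_trans; [apply Cmod_le_l2norm, (resolvent_l2 z r e0 Hz Hr He0)|].
  rewrite <- inverse_zsub_eq by assumption. apply Hge; assumption.
Qed.

Lemma ln_succ_ge k : (1 <= k)%nat -> 1 <= (INR k + 1) * (ln (INR k + 1) - ln (INR k)).
Proof.
  intros Hk. assert (Hk1 : 1 <= INR k) by (apply (le_INR 1); exact Hk).
  assert (Hexp : INR k / (INR k + 1) <= exp (- / (INR k + 1))).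
  { replace (INR k / (INR k + 1)) with (1 + - / (INR k + 1)) by (field; lra).
    apply exp_ineq1_le. }
  apply ln_le in Hexp; [|apply Rdiv_lt_0_compat; lra].
  rewrite ln_exp, ln_div in Hexp by lra.
  apply (Rmult_le_compat_l (INR k + 1)) in Hexp; [|lra].
  replace ((INR k + 1) * - / (INR k + 1)) with (-1) in Hexp by (field; lra). lra.
Qed.

Lemma ln_fact_le k : (1 <= k)%nat ->
  ln (INR (Factorial.fact k)) <= INR k * ln (INR k) - INR k + 1 + ln (INR k).
Proof.
  induction k as [|k IHk]; intros Hk; [lia|].
  destruct k as [|k]; [simpl; rewrite ln_1; lra|].
  specialize (IHk ltac:(lia)).
  rewrite fact_simpl, mult_INR, ln_mult by (apply lt_0_INR; auto using Factorial.lt_O_fact; lia).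
  pose proof (ln_succ_ge (S k) ltac:(lia)) as Hstep.
  rewrite (S_INR (S k)). set (n := INR (S k)) in *. nra.
Qed.

Lemma ln_exp_term_ge u : 0 <= u ->
  exists k, 0 < exp_term u k /\ u - 2 - ln (Rmax 1 u) <= ln (exp_term u k).
Proof.
  intros Hu. destruct (Rlt_le_dec u 1) as [Hu1|Hu1].
  - exists O. rewrite exp_term_0, Rmax_left, ln_1 by lra. lra.
  - destruct (nfloor_ex u Hu) as [k [Hk1 Hk2]].
    assert (Hk : (1 <= k)%nat) by (destruct k; [simpl in Hk2; lra|lia]).
    assert (Hkr : 1 <= INR k) by (apply (le_INR 1); exact Hk).
    exists k. split; [apply exp_term_pos; lra|].
    rewrite Rmax_right by lra. unfold exp_term.
    rewrite ln_div, Rpower.ln_pow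
      by (try apply pow_lt; try apply lt_0_INR, Factorial.lt_O_fact; lra).
    pose proof (ln_fact_le k Hk).
    assert (ln (INR k) <= ln u) by (apply ln_le; lra).
    assert (INR k * ln (INR k) <= INR k * ln u) by (apply Rmult_le_compat_l; lra).
    lra.
Qed.

Lemma ln_opnorm_inverse_zsub_bounds (z : C) (r : R) :
  z <> RtoC 0 -> 0 <= r -> 1 <= / Cmod z ->
  r * / Cmod z - (2 + ln (Rmax 1 r)) <= ln (opnorm (inverse (zsub z r A))) <=
  r * / Cmod z + ln (/ Cmod z).
Proof.
  intros Hz Hr Hs.
  destruct (opnorm_inverse_zsub_bounds z r Hz Hr) as [Hlo Hup].
  set (s := / Cmod z) in *. set (N := opnorm (inverse (zsub z r A))) in *.
  destruct (ln_exp_term_ge (r * s)) as [k [Hpos Hk]]; [nra|].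
  specialize (Hlo k).
  assert (HN : 0 < N) by nra.
  assert (Hmax : ln (Rmax 1 (r * s)) <= ln (Rmax 1 r) + ln s).
  { rewrite <- ln_mult by (try apply (Rlt_le_trans _ 1); auto using Rmax_l; lra).
    apply ln_le; [apply (Rlt_le_trans _ 1); [lra|apply Rmax_l]|].
    pose proof (Rmax_l 1 r). pose proof (Rmax_r 1 r).
    apply Rmax_lub; nra. }
  split.
  - apply ln_le in Hlo; [|nra]. rewrite ln_mult in Hlo by lra. lra.
  - apply ln_le in Hup; [|exact HN]. rewrite ln_mult, ln_exp in Hup by (try apply exp_pos; lra).
    lra.
Qed.

Lemma ln_le_2sqrt s : 0 < s -> ln s <= 2 * sqrt s.
Proof.
  intros Hs. assert (Ht : 0 < sqrt s) by (apply sqrt_lt_R0, Hs).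
  rewrite <- (sqrt_sqrt s) at 1 by lra. rewrite ln_mult by exact Ht.
  pose proof (exp_ineq1_le (ln (sqrt s))) as Hexp. rewrite exp_ln in Hexp by exact Ht. lra.
Qed.

Lemma ratio_tends_to_slope (r c c' eps : R) : 0 <= r -> 0 <= c -> 0 <= c' -> 0 < eps ->
  exists S, 1 <= S /\ forall s N D, S <= s ->
    r * s - c <= N <= r * s + ln s -> s - c' <= D <= s + ln s ->
    Rabs (N / D - r) < eps.
Proof.
  intros Hr Hc Hc' Heps.
  set (K := c + r * c'). set (T := 8 * (1 + r) / eps).
  assert (HK : 0 <= K) by (unfold K; nra).
  assert (Heps' : 0 < / eps) by (apply Rinv_0_lt_compat, Heps).
  assert (HT : 0 <= T) by (unfold T, Rdiv; apply Rmult_le_pos; lra).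
  assert (HT2 : 0 <= T ^ 2) by apply pow2_ge_0.
  assert (HKe : 0 <= 4 * K / eps) by (unfold Rdiv; apply Rmult_le_pos; lra).
  exists (1 + 2 * c' + 4 * K / eps + T ^ 2). split; [lra|].
  intros s N D HS [HN1 HN2] [HD1 HD2].
  assert (Hs1 : 1 <= s) by lra.
  assert (Hs : 0 < s) by lra.
  set (t := sqrt s). assert (Ht : t * t = s) by (apply sqrt_sqrt; lra).
  assert (Ht0 : 0 <= t) by apply sqrt_pos.
  pose proof (ln_le_2sqrt s Hs) as Hln. fold t in Hln.
  assert (Hln0 : 0 <= ln s) by (rewrite <- ln_1; apply ln_le; lra).
  assert (HD : s / 2 <= D) by lra.
  assert (HNrD : Rabs (N - r * D) <= K + 2 * (1 + r) * t) by (apply Rabs_le; unfold K; split; nra).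
  assert (HKs : 4 * K < eps * s).
  { apply (Rmult_lt_reg_r (/ eps)); [exact Heps'|].
    replace (eps * s * / eps) with s by (field; lra). lra. }
  assert (HTt : T <= t).
  { destruct (Rle_lt_dec T t) as [H|H]; [exact H|]. nra. }
  assert (Htt : 8 * (1 + r) * t <= eps * t * t).
  { apply Rmult_le_compat_r; [exact Ht0|].
    unfold T in HTt. apply (Rmult_le_compat_l eps) in HTt; [|lra].
    replace (eps * (8 * (1 + r) / eps)) with (8 * (1 + r)) in HTt by (field; lra). exact HTt. }
  assert (HDpos : 0 < D) by lra.
  replace (N / D - r) with ((N - r * D) / D) by (field; lra).
  unfold Rdiv. rewrite Rabs_mult, Rabs_inv, (Rabs_pos_eq D) by lra.
  apply (Rmult_lt_reg_r D); [exact HDpos|]. rewrite Rmult_assoc, Rinv_l by lra. nra.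
Qed.

Theorem lemma3p5 (r : R) (hr : 0 <= r) :
  forall eps : R, 0 < eps ->
  exists delta : R, 0 < delta /\
    forall z : C, z <> RtoC 0 -> Cmod z < delta ->
      Rabs (ln (opnorm (inverse (zsub z r A))) / ln (opnorm (inverse (zsub z 1 A))) - r) < eps.
Proof.
  intros eps Heps.
  assert (Hc : forall a, 0 <= 2 + ln (Rmax 1 a)).
  { intros a. pose proof (ln_le 1 (Rmax 1 a) ltac:(lra) (Rmax_l 1 a)) as Hln.
    rewrite ln_1 in Hln. lra. }
  destruct (ratio_tends_to_slope r _ _ eps hr (Hc r) (Hc 1) Heps) as [S [HS HSlope]].
  exists (/ S). split; [apply Rinv_0_lt_compat; lra|].
  intros z Hz Hzd. assert (Hm : 0 < Cmod z) by (apply Cmod_gt_0, Hz).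
  assert (Hs : S <= / Cmod z).
  { rewrite <- (Rinv_inv S). apply Rlt_le, Rinv_lt_contravar; [|exact Hzd].
    apply Rmult_lt_0_compat; [exact Hm|apply Rinv_0_lt_compat; lra]. }
  apply (HSlope (/ Cmod z)); [exact Hs| |].
  - apply ln_opnorm_inverse_zsub_bounds; [exact Hz|exact hr|lra].
  - pose proof (ln_opnorm_inverse_zsub_bounds z 1 Hz ltac:(lra) ltac:(lra)) as HD.
    rewrite Rmult_1_l in HD. exact HD.
Qed.
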